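(* Let $n\ge2$. For $s=1,\dots,n-1$, $$(1+\mathfrak p_n)^*\cap(1+\mathfrak a_{n,s})^*=\Big(1+\sum_{|I|=s,\ n\in I}\mathfrak p_I\Big)^*,$$ and $(1+\mathfrak p_n)^*\cap(1+\mathfrak a_{n,n})^*=(1+F_n)^*$.
   Context: $K$ is a field. $\mathbb S_n$ is the $K$-algebra generated by $x_1,\dots,x_n,y_1,\dots,y_n$ with relations $y_ix_i=1$ and $[x_i,y_j]=[x_i,x_j]=[y_i,y_j]=0$ ($i\ne j$). $e_i:=1-x_iy_i$; $\mathfrak p_i$ is the ideal of $\mathbb S_n$ generated by $e_i$; for $I\subseteq\{1,\dots,n\}$, $\mathfrak p_I:=\prod_{i\in I}\mathfrak p_i$ (which equals $\bigcap_{i\in I}\mathfrak p_i$); $\mathfrak a_{n,s}:=\sum_{|I|=s}\mathfrak p_I$ for $1\le s\le n$; $F_n:=\mathfrak p_{\{1,\dots,n\}}=\mathfrak a_{n,n}$. For a proper ideal $\mathfrak b$ of $\mathbb S_n$, $(1+\mathfrak b)^*$ denotes the group of units of $\mathbb S_n$ lying in $1+\mathfrak b$. *)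

(* The Jacobian algebra S_n is built literally as the
   K-algebra given by generators and relations: the quotient of the
   type of formal algebra expressions in x_i, y_i (i : 'I_n) with scalar
   constants from K, by the congruence generated by the K-algebra axioms
   and the defining relations.  Elements of S_n are represented by terms;
   equality in S_n is the congruence [eqS]. *)
From HB Require Import structures.
From mathcomp Require Import all_boot all_order all_algebra.
Set Implicit Arguments. Unset Strict Implicit. Unset Printing Implicit Defensive.
Import GRing.Theory.
Local Open Scope ring_scope.

Section Jacobian.
Variables (K : fieldType) (n : nat).

Inductive term : Type :=
| tC : K -> term
| tX : 'I_n -> term
| tY : 'I_n -> term
| tAdd : term -> term -> term
| tMul : term -> term -> term.

Definition tSub (a b : term) : term := tAdd a (tMul (tC (-1)) b).

Inductive eqS : term -> term -> Prop :=
| eqS_refl a : eqS a a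
| eqS_sym a b : eqS a b -> eqS b a
| eqS_trans a b c : eqS a b -> eqS b c -> eqS a c
| eqS_add a a' b b' : eqS a a' -> eqS b b' -> eqS (tAdd a b) (tAdd a' b')
| eqS_mul a a' b b' : eqS a a' -> eqS b b' -> eqS (tMul a b) (tMul a' b')
| eqS_addA a b c : eqS (tAdd a (tAdd b c)) (tAdd (tAdd a b) c)
| eqS_addC a b : eqS (tAdd a b) (tAdd b a)
| eqS_add0 a : eqS (tAdd (tC 0) a) a
| eqS_addN a : eqS (tAdd a (tMul (tC (-1)) a)) (tC 0)
| eqS_mulA a b c : eqS (tMul a (tMul b c)) (tMul (tMul a b) c)
| eqS_mul1l a : eqS (tMul (tC 1) a) a
| eqS_mul1r a : eqS (tMul a (tC 1)) a
| eqS_mulDl a b c : eqS (tMul (tAdd a b) c) (tAdd (tMul a c) (tMul b c))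
| eqS_mulDr a b c : eqS (tMul a (tAdd b c)) (tAdd (tMul a b) (tMul a c))
| eqS_Cadd c d : eqS (tAdd (tC c) (tC d)) (tC (c + d))
| eqS_Cmul c d : eqS (tMul (tC c) (tC d)) (tC (c * d))
| eqS_Ccentral c a : eqS (tMul (tC c) a) (tMul a (tC c))
| eqS_yx i : eqS (tMul (tY i) (tX i)) (tC 1)
| eqS_xy i j : i != j -> eqS (tMul (tX i) (tY j)) (tMul (tY j) (tX i))
| eqS_xx i j : i != j -> eqS (tMul (tX i) (tX j)) (tMul (tX j) (tX i))
| eqS_yy i j : i != j -> eqS (tMul (tY i) (tY j)) (tMul (tY j) (tY i)).

Inductive idealGen (G : term -> Prop) : term -> Prop :=
| iG_gen a : G a -> idealGen G a
| iG_0 : idealGen G (tC 0)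
| iG_add a b : idealGen G a -> idealGen G b -> idealGen G (tAdd a b)
| iG_mull r a : idealGen G a -> idealGen G (tMul r a)
| iG_mulr a r : idealGen G a -> idealGen G (tMul a r)
| iG_eq a b : eqS a b -> idealGen G a -> idealGen G b.

Definition idealMul (A B : term -> Prop) : term -> Prop :=
  idealGen (fun t => exists a b, [/\ A a, B b & t = tMul a b]).

Definition e_ (i : 'I_n) : term := tSub (tC 1) (tMul (tX i) (tY i)).

Definition p_ (i : 'I_n) : term -> Prop := idealGen (fun t => t = e_ i).

Definition p_I (I : {set 'I_n}) : term -> Prop :=
  foldr (fun i A => idealMul (p_ i) A) (fun _ => True) (enum I).

Definition a_ns (s : nat) : term -> Prop :=
  idealGen (fun t => exists I : {set 'I_n}, #|I| = s /\ p_I I t).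

Definition a_ns_with (s : nat) (i0 : 'I_n) : term -> Prop :=
  idealGen (fun t => exists I : {set 'I_n}, [/\ #|I| = s, i0 \in I & p_I I t]).

Definition F_n : term -> Prop := p_I [set: 'I_n].

Definition unitS (u : term) : Prop :=
  exists v, eqS (tMul u v) (tC 1) /\ eqS (tMul v u) (tC 1).

Definition in1plus_units (b : term -> Prop) (u : term) : Prop :=
  unitS u /\ b (tSub u (tC 1)).

End Jacobian.

(* Every element t of p_i is killed by a power of y_i (y_i e_i = 0, and y_i^d
   can be moved across any element of S_n at the cost of lowering the
   exponent by a bounded amount).  Conversely, since 1 = e_i + x_i y_i, an
   element t with y_i^N t = 0 lies in an ideal P as soon as all e_i r t do,
   by induction on N.  Hence p_i ∩ B = p_i B for every ideal B, so p_I is the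
   intersection of the p_j, and for t in a_{n,s} every e_i r t lies in some
   p_I with i ∈ I and |I| = s: either i is already in I, or swap i for some
   j ∈ I. *)
From HB Require Import structures.
From mathcomp Require Import all_boot all_order all_algebra.
From Stdlib Require Import Setoid Morphisms.
From mathcomp Require Import zify.
Set Implicit Arguments. Unset Strict Implicit. Unset Printing Implicit Defensive.
Import GRing.Theory.

Section JacobianIdeals.
Variables (K : fieldType) (n : nat).
Local Notation T := (term K n).
Local Notation "a =S b" := (@eqS K n a b) (at level 70).
Local Notation C c := (tC n c).
Local Notation X i := (tX K i).
Local Notation Y i := (tY K i).
Local Notation E i := (e_ K i).

Global Instance eqS_Equivalence : Equivalence (@eqS K n).
Proof. split; [exact: eqS_refl | exact: eqS_sym | exact: eqS_trans]. Qed.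

Global Instance tAdd_Proper : Proper (@eqS K n ==> @eqS K n ==> @eqS K n) (@tAdd K n).
Proof. by move=> a a' Ha b b' Hb; apply: eqS_add. Qed.

Global Instance tMul_Proper : Proper (@eqS K n ==> @eqS K n ==> @eqS K n) (@tMul K n).
Proof. by move=> a a' Ha b b' Hb; apply: eqS_mul. Qed.

#[local] Hint Extern 0 (eqS _ _) => reflexivity : core.

Lemma eqS_addr0 (a : T) : tAdd a (C 0%R) =S a.
Proof. by rewrite eqS_addC eqS_add0. Qed.

Lemma eqS_mul0l (a : T) : tMul (C 0%R) a =S C 0%R.
Proof.
have zz : tAdd (tMul (C 0%R) a) (tMul (C 0%R) a) =S tMul (C 0%R) a.
  by rewrite -eqS_mulDl eqS_Cadd addr0.
move: (tMul _ a) zz => z zz.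
transitivity (tAdd z (tAdd z (tMul (C (-1)%R) z))); first by rewrite eqS_addN eqS_addr0.
by rewrite eqS_addA zz eqS_addN.
Qed.

Lemma eqS_mul0r (a : T) : tMul a (C 0%R) =S C 0%R.
Proof. by rewrite -eqS_Ccentral eqS_mul0l. Qed.

Lemma eqS_x_y_plus_e (i : 'I_n) : tAdd (E i) (tMul (X i) (Y i)) =S C 1%R.
Proof.
rewrite /e_ /tSub -eqS_addA [tAdd (tMul (C _) _) _]eqS_addC eqS_addN.
exact: eqS_addr0.
Qed.

Lemma eqS_y_e (i : 'I_n) : tMul (Y i) (E i) =S C 0%R.
Proof.
rewrite /e_ /tSub eqS_mulDr eqS_mul1r eqS_mulA -(eqS_Ccentral (-1)%R (Y i)).
by rewrite -eqS_mulA (eqS_mulA (Y i) (X i)) eqS_yx eqS_mul1l eqS_addN.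
Qed.

Fixpoint tPow (a : T) (k : nat) : T :=
  if k is k'.+1 then tMul (tPow a k') a else C 1%R.

Lemma tPowD (a : T) m k : tPow a (m + k) =S tMul (tPow a m) (tPow a k).
Proof.
elim: k => [|k IH]; first by rewrite addn0 /= eqS_mul1r.
by rewrite addnS /= IH eqS_mulA.
Qed.

Lemma tPow_comm (y a : T) N :
  tMul a y =S tMul y a -> tMul (tPow y N) a =S tMul a (tPow y N).
Proof.
move=> ay; elim: N => [|N IH] /=; first by rewrite eqS_mul1l eqS_mul1r.
by rewrite -eqS_mulA -ay eqS_mulA IH -eqS_mulA.
Qed.

Lemma tPowY_mul_shift (i : 'I_n) (r : T) : exists d, forall N, exists r',
  tMul (tPow (Y i) (N + d)) r =S tMul r' (tPow (Y i) N).
Proof.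
elim: r => [c|j|j|r1 [d1 IH1] r2 [d2 IH2]|r1 [d1 IH1] r2 [d2 IH2]].
- by exists 0%N => N; exists (C c); rewrite addn0 eqS_Ccentral.
- have [->|ji] := eqVneq j i.
    exists 1%N => N; exists (C 1%R).
    by rewrite addn1 /= -eqS_mulA eqS_yx eqS_mul1r eqS_mul1l.
  by exists 0%N => N; exists (X j); rewrite addn0; apply/tPow_comm/eqS_xy.
- exists 0%N => N; exists (Y j); rewrite addn0; apply: tPow_comm.
  by have [->|ji] := eqVneq j i; [reflexivity | apply: eqS_yy].
- exists (d1 + d2)%N => N.
  have [r1' E1] := IH1 (d2 + N)%N; have [r2' E2] := IH2 (d1 + N)%N.
  exists (tAdd (tMul r1' (tPow (Y i) d2)) (tMul r2' (tPow (Y i) d1))).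
  rewrite eqS_mulDr eqS_mulDl.
  have -> : (N + (d1 + d2) = (d2 + N) + d1)%N by lia.
  rewrite E1.
  have -> : ((d2 + N) + d1 = (d1 + N) + d2)%N by lia.
  by rewrite E2 !tPowD -!eqS_mulA.
- exists (d1 + d2)%N => N.
  have [r2' E2] := IH2 N; have [r1' E1] := IH1 (N + d2)%N.
  exists (tMul r1' r2').
  have -> : (N + (d1 + d2) = (N + d2) + d1)%N by lia.
  by rewrite eqS_mulA E1 -eqS_mulA E2 eqS_mulA.
Qed.

Lemma p_annihilated_by_tPowY (i : 'I_n) t :
  p_ i t -> exists N, tMul (tPow (Y i) N) t =S C 0%R.
Proof.
elim=> [a ->||a b _ [N1 Ha] _ [N2 Hb]|r a _ [N Ha]|a r _ [N Ha]|a b ab _ [N Ha]].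
- by exists 1%N => /=; rewrite eqS_mul1l eqS_y_e.
- by exists 0%N; rewrite eqS_mul0r.
- exists (N2 + N1)%N; rewrite eqS_mulDr.
  rewrite [Z in tAdd (tMul Z _) _]tPowD -eqS_mulA Ha eqS_mul0r.
  by rewrite addnC tPowD -eqS_mulA Hb eqS_mul0r eqS_addr0.
- have [d Hd] := tPowY_mul_shift i r; have [r' Er] := Hd N.
  by exists (N + d)%N; rewrite eqS_mulA Er -eqS_mulA Ha eqS_mul0r.
- by exists N; rewrite eqS_mulA Ha eqS_mul0l.
- by exists N; rewrite -ab.
Qed.

Record ideal (P : T -> Prop) : Prop := Ideal {
  ideal0 : P (C 0%R);
  idealD : forall a b, P a -> P b -> P (tAdd a b);
  idealMl : forall r a, P a -> P (tMul r a);
  idealMr : forall a r, P a -> P (tMul a r);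
  ideal_eqS : forall a b, a =S b -> P a -> P b }.

Lemma idealGen_ideal (G : T -> Prop) : ideal (idealGen G).
Proof.
by split; [exact: iG_0 | exact: iG_add | exact: iG_mull | exact: iG_mulr | exact: iG_eq].
Qed.

Lemma idealGen_min (G P : T -> Prop) :
  ideal P -> (forall a, G a -> P a) -> forall t, idealGen G t -> P t.
Proof. by move=> [P0 PD PMl PMr Peq] GP t; elim=> //; eauto. Qed.

Lemma idealGen_mono (G H : T -> Prop) :
  (forall a, G a -> H a) -> forall t, idealGen G t -> idealGen H t.
Proof. by move=> GH; apply: idealGen_min (idealGen_ideal _) _ => a /GH /iG_gen. Qed.

Lemma idealMul_subl (A B : T -> Prop) t : ideal A -> idealMul A B t -> A t.
Proof. by move=> IA; apply: idealGen_min => // a [x [y [Ax _ ->]]]; apply: idealMr. Qed.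

Lemma idealMul_subr (A B : T -> Prop) t : ideal B -> idealMul A B t -> B t.
Proof. by move=> IB; apply: idealGen_min => // a [x [y [_ By ->]]]; apply: idealMl. Qed.

Lemma ideal_eMul_preimage (e : T) (P : T -> Prop) :
  ideal P -> ideal (fun t => forall r, P (tMul e (tMul r t))).
Proof.
move=> IP; split.
- by move=> r; apply: ideal_eqS IP _ _ _ (ideal0 IP); rewrite !eqS_mul0r.
- move=> a b Ha Hb r; apply: ideal_eqS IP _ _ _ (idealD IP (Ha r) (Hb r)).
  by rewrite -!eqS_mulDr.
- by move=> r0 a Ha r; apply: ideal_eqS IP _ _ _ (Ha (tMul r r0)); rewrite (eqS_mulA r r0 a).
- move=> a r0 Ha r; apply: ideal_eqS IP _ _ _ (idealMr IP r0 (Ha r)).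
  by rewrite -!eqS_mulA.
- by move=> a b ab Ha r; apply: ideal_eqS IP _ _ _ (Ha r); rewrite ab.
Qed.

(* Induction on N, using t = e_i t + x_i (y_i t). *)
Lemma ideal_mem_of_eMul (i : 'I_n) (P : T -> Prop) : ideal P -> forall N t,
  tMul (tPow (Y i) N) t =S C 0%R -> (forall r, P (tMul (E i) (tMul r t))) -> P t.
Proof.
move=> IP; elim=> [|N IH] t /= yt Pet.
  by apply: ideal_eqS IP _ _ _ (ideal0 IP); rewrite -yt eqS_mul1l.
have Pyt : P (tMul (Y i) t).
  apply: IH => [|r]; first by rewrite eqS_mulA.
  by apply: ideal_eqS IP _ _ _ (Pet (tMul r (Y i))); rewrite -eqS_mulA.
apply: ideal_eqS IP _ _ _ (idealD IP (Pet (C 1%R)) (idealMl IP (X i) Pyt)).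
by rewrite eqS_mul1l eqS_mulA -eqS_mulDl eqS_x_y_plus_e eqS_mul1l.
Qed.

Lemma p_mem_of_eMul (i : 'I_n) (P : T -> Prop) t :
  ideal P -> p_ i t -> (forall r, P (tMul (E i) (tMul r t))) -> P t.
Proof.
by move=> IP /p_annihilated_by_tPowY [N yt]; apply: ideal_mem_of_eMul IP N t yt.
Qed.

Lemma p_ideal (j : 'I_n) : ideal (p_ j).
Proof. exact: idealGen_ideal. Qed.

Lemma p_meet_sub_mul (j : 'I_n) (B : T -> Prop) t :
  ideal B -> p_ j t -> B t -> idealMul (p_ j) B t.
Proof.
move=> IB pt Bt; apply: p_mem_of_eMul (idealGen_ideal _) pt _ => r.
by apply: iG_gen; exists (E j), (tMul r t); split=> //; [apply: iG_gen | apply: idealMl].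
Qed.

Local Notation p_foldr l :=
  (foldr (fun i A => idealMul (p_ i) A) (fun _ : T => True) l).

Lemma p_foldr_ideal (l : seq 'I_n) : ideal (p_foldr l).
Proof. by case: l => [|j l]; [split | exact: idealGen_ideal]. Qed.

Lemma p_foldrE (l : seq 'I_n) t : p_foldr l t <-> (forall j, j \in l -> p_ j t).
Proof.
elim: l => [|j l IH] /=; first by [].
split=> [jlt k|plt].
  rewrite inE => /predU1P [->|kl]; first exact: idealMul_subl (p_ideal j) jlt.
  exact: (proj1 IH (idealMul_subr (p_foldr_ideal l) jlt) k kl).
apply: p_meet_sub_mul (p_foldr_ideal l) _ _; first by apply: plt; rewrite inE eqxx.
by apply/IH => k kl; apply: plt; rewrite inE kl orbT.
Qed.

Lemma p_IE (I : {set 'I_n}) (t : T) : p_I I t <-> (forall j, j \in I -> p_ j t).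
Proof.
rewrite /p_I p_foldrE.
by split=> H j; [rewrite -mem_enum; apply: H | rewrite mem_enum; apply: H].
Qed.

Lemma p_I_ideal (I : {set 'I_n}) : ideal (p_I I).
Proof. exact: p_foldr_ideal. Qed.

Lemma a_ns_with_ideal s (i : 'I_n) : ideal (a_ns_with s i).
Proof. exact: idealGen_ideal. Qed.

Lemma eMul_p_I_sub_a_ns_with s (i : 'I_n) (I : {set 'I_n}) (t r : T) :
  #|I| = s -> 0 < s -> p_I I t -> a_ns_with s i (tMul (E i) (tMul r t)).
Proof.
move=> cardI s_gt0 pIt; have [iI|iNI] := boolP (i \in I).
  by apply/(idealMl (a_ns_with_ideal s i))/(idealMl (a_ns_with_ideal s i))/iG_gen; exists I.
have [j jI] : exists j, j \in I by apply/set0Pn; rewrite -card_gt0 cardI.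
apply: iG_gen; exists (i |: (I :\ j)); split; [|by rewrite setU11|].
  by rewrite cardsU1 !inE (negPf iNI) andbF add1n -cardI (cardsD1 j I) jI.
apply/p_IE => k; rewrite !inE => /orP [/eqP ->|/andP [_ kI]].
  by apply/(idealMr (p_ideal i))/iG_gen.
by apply/(idealMl (p_ideal k))/(idealMl (p_ideal k))/(proj1 (p_IE I t) pIt).
Qed.

Lemma p_meet_a_ns s (i : 'I_n) (t : T) :
  0 < s -> p_ i t /\ a_ns s t <-> a_ns_with s i t.
Proof.
move=> s_gt0; split=> [[pt at_]|at_].
  apply: p_mem_of_eMul (a_ns_with_ideal s i) pt _.
  apply: idealGen_min (ideal_eMul_preimage _ (a_ns_with_ideal s i)) _ _ at_.
  by move=> a [I [cardI pIa]] r; apply: eMul_p_I_sub_a_ns_with s_gt0 pIa.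
split.
  apply: idealGen_min (p_ideal i) _ _ at_ => a [I [_ iI pIa]].
  exact: (proj1 (p_IE I a) pIa i iI).
by apply: idealGen_mono at_ => a [I [cardI _ pIa]]; exists I.
Qed.

Lemma a_nnE (t : T) : a_ns n t <-> F_n t.
Proof.
split=> [|Ft]; last by apply: iG_gen; exists setT; rewrite cardsT card_ord.
apply: idealGen_min (p_I_ideal _) _ t => a [I [cardI pIa]].
suff -> : [set: 'I_n] = I by [].
by apply/eqP; rewrite eq_sym eqEcard subsetT cardsT card_ord cardI leqnn.
Qed.

Lemma F_n_sub_p (i : 'I_n) (t : T) : F_n t -> p_ i t.
Proof. by move=> Ft; apply: (proj1 (p_IE _ _) Ft i); rewrite inE. Qed.

Lemma in1plus_units_meet (A B D : T -> Prop) :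
  (forall t, A t /\ B t <-> D t) ->
  forall u, in1plus_units A u /\ in1plus_units B u <-> in1plus_units D u.
Proof.
move=> ABD u; split=> [[[uU Au] [_ Bu]]|[uU Du]]; first by split=> //; apply/ABD.
by have [Au Bu] := proj2 (ABD _) Du.
Qed.

End JacobianIdeals.

Theorem lemma3p1 (K : fieldType) (n : nat) (hn : 2 <= n) (i : 'I_n)
    (hi : val i = n.-1) :
  (forall s : nat, 1 <= s <= n.-1 ->
     forall u : term K n,
       (in1plus_units (p_ i) u /\ in1plus_units (a_ns s) u)
       <-> in1plus_units (a_ns_with s i) u)
  /\
  (forall u : term K n,
     (in1plus_units (p_ i) u /\ in1plus_units (a_ns n) u)
     <-> in1plus_units (@F_n K n) u).
Proof.
split=> [s /andP [s_gt0 _]|]; apply: in1plus_units_meet => t.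
  exact: p_meet_a_ns.
rewrite a_nnE; split=> [[]//|Ft].
by split=> //; apply: F_n_sub_p.
Qed.
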